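(* For every integer $d\ge 3$, $\lambda(d,2^{d-3})\ge 1-\dfrac{3^d-2}{7^{d-1}}$.
   Context: A $d$-subcube of $\{0,1\}^n$ is a set $C\subseteq\{0,1\}^n$ obtained by fixing $n-d$ coordinates to constant values and letting the remaining $d$ coordinates vary arbitrarily; there are $\binom nd 2^{n-d}$ of them. For integers $0\le s\le 2^d$ and $S\subseteq\{0,1\}^n$, let $\Lambda(S,d,s)$ be the number of $d$-subcubes $C$ with $|S\cap C|=s$, let $\Lambda(n,d,s)=\max\{\Lambda(S,d,s): S\subseteq\{0,1\}^n\}$ for $n\ge d$, and let $\lambda(d,s)=\lim_{n\to\infty}\Lambda(n,d,s)/\big(\binom nd 2^{n-d}\big)$ (the limit exists since the ratio is non-increasing in $n$). *)

From HB Require Import structures.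
From mathcomp Require Import all_boot all_order all_algebra.
From mathcomp Require Import all_classical all_reals all_analysis.
Set Implicit Arguments. Unset Strict Implicit. Unset Printing Implicit Defensive.
Import Order.TTheory GRing.Theory Num.Theory.
Import numFieldNormedType.Exports.

Definition cube (n : nat) := {ffun 'I_n -> bool}.

Definition is_subcube (n d : nat) (C : {set cube n}) : bool :=
  [exists F : {set 'I_n}, (#|F| == d) &&
     [exists a : cube n, C == [set x : cube n | [forall i in ~: F, x i == a i]]]].

Definition LamS (n d s : nat) (S : {set cube n}) : nat :=
  #|[set C : {set cube n} | is_subcube d C && (#|S :&: C| == s)]|.

Definition Lam (n d s : nat) : nat :=
  \max_(S : {set cube n}) LamS d s S.

(* lambda(d,s) = lim_{n -> oo} Lambda(n,d,s) / (C(n,d) 2^(n-d));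
   the sequence is indexed by k = n - d (so n = k + d >= d). *)
Definition lambda (R : realType) (d s : nat) : R :=
  limn (fun k : nat =>
    ((Lam (k + d) d s)%:R / ('C(k + d, d) * 2 ^ k)%:R)%R : R).

(* The normalised counts Lam n d s / ('C(n, d) 2^(n-d)) are non-increasing in n, so
   lambda(d, s) is their infimum and it suffices to bound each of them from below.
   Monotonicity is double counting: a d-subcube of {0,1}^(n+1) has n+1-d fixed
   coordinates, and for each of the 2(n+1) choices of a fixed coordinate i and its value b,
   the subcubes inside the slice {x_i = b} that meet S in s points are at most Lam n d s.
   The lower bound is a random construction.  For v : [n] -> F_2^3 \ {0} let
   S_v = {x | sum_{x_i = 1} v_i = 0}.  If the values of v on the free coordinates of a
   d-subcube C span F_2^3, a character sum gives |S_v ∩ C| = 2^(d-3).  The v that fail to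
   span on a fixed d-set F are those killed on F by one of the 7 nonzero functionals;
   each functional kills a fraction (3/7)^d of all v, and a v constant on F is killed by
   three of them, which sharpens the union bound to (3^d - 2) / 7^(d-1).  Averaging over
   the 7^n choices of v yields some S_v with enough good subcubes. *)

From mathcomp Require Import all_boot all_algebra.
From mathcomp Require Import ring zify.
Set Implicit Arguments. Unset Strict Implicit. Unset Printing Implicit Defensive.
Import GRing.Theory Num.Theory.

Lemma card_setC_ord n (F : {set 'I_n}) : #|~: F| = n - #|F|.
Proof. by rewrite [#|~: F|]cardsCs setCK card_ord. Qed.

Lemma card_split_ffun (I T : finType) (F : {set I}) (A B : {set T}) :
  #|[set f : {ffun I -> T} | [forall i, f i \in (if i \in F then A else B)]]| =
  #|A| ^ #|F| * #|B| ^ #|~: F|.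
Proof.
rewrite (@eq_card _ _ (family (fun i => if i \in F then A else B))); last first.
  by move=> f; rewrite inE; apply/forallP/familyP.
rewrite card_family foldrE big_map big_enum /= (bigID (mem F)) /=.
congr (_ * _); first by rewrite -prod_nat_const; apply: eq_bigr => i ->.
rewrite -prod_nat_const; apply: eq_big => i; first by rewrite inE.
by move/negbTE ->.
Qed.

Lemma double_counting (I J : finType) (A : {set I}) (B : {set J}) (rel : I -> J -> bool) :
  \sum_(i in A) #|[set j in B | rel i j]| = \sum_(j in B) #|[set i in A | rel i j]|.
Proof.
have card_sub (T : finType) (C : {set T}) P : #|[set x in C | P x]| = \sum_(x in C | P x) 1.
  by rewrite -sum1_card; apply: eq_bigl => x; rewrite !inE.
under eq_bigr do rewrite card_sub.
rewrite (exchange_big_dep (fun j => j \in B)) => [|i j _ /andP [] //].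
by apply: eq_bigr => j jB; rewrite card_sub; apply: eq_bigl => i; rewrite jB.
Qed.

Lemma sum_indicator (T : finType) (A : {set T}) (P : pred T) :
  \sum_(x in A) (P x : nat) = #|[set x in A | P x]|.
Proof. by rewrite -sum1dep_card big_mkcondr; apply: eq_bigr => x _; case: (P x). Qed.

(* A subcube is encoded by a pattern: [None] marks a free coordinate,
   [Some b] a coordinate fixed to [b]. *)
Notation pattern n := {ffun 'I_n -> option bool}.

Definition agrees (o : option bool) (b : bool) : bool :=
  if o is Some b' then b == b' else true.

Section Patterns.
Variable n : nat.
Implicit Types (c : pattern n) (x : cube n).

Definition subcube_of c : {set cube n} := [set x : cube n | [forall i, agrees (c i) (x i)]].
Definition free_coords c : {set 'I_n} := [set i | c i == None].
Definition pattern_point c : cube n := [ffun i => odflt false (c i)].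
Definition flip_coord (i : 'I_n) x : cube n := [ffun j => if j == i then ~~ x j else x j].

Lemma pattern_point_in c : pattern_point c \in subcube_of c.
Proof. by rewrite inE; apply/forallP => i; rewrite ffunE; case: (c i) => [b|] /=. Qed.

Lemma subcube_of_Some c x i b : x \in subcube_of c -> c i = Some b -> x i = b.
Proof. by rewrite inE => /forallP /(_ i) + ci; rewrite ci => /eqP. Qed.

Lemma flip_coord_subcube_of c x i :
  x \in subcube_of c -> c i = None -> flip_coord i x \in subcube_of c.
Proof.
rewrite !inE => /forallP xc ci; apply/forallP => j; rewrite ffunE.
by case: eqP => [->|_]; [rewrite ci | exact: xc].
Qed.

Lemma subcube_of_inj : injective subcube_of.
Proof.
have fixed c c' i b : subcube_of c = subcube_of c' -> c i = Some b -> c' i = Some b.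
  move=> E ci; have pc : pattern_point c \in subcube_of c' by rewrite -E pattern_point_in.
  case c'i: (c' i) => [b'|].
    by rewrite -(subcube_of_Some pc c'i) (subcube_of_Some (pattern_point_in c) ci).
  have p' : pattern_point c' \in subcube_of c by rewrite E pattern_point_in.
  have f' : flip_coord i (pattern_point c') \in subcube_of c.
    by rewrite E flip_coord_subcube_of ?pattern_point_in.
  move: (subcube_of_Some f' ci) (subcube_of_Some p' ci).
  by rewrite ffunE eqxx => <-; case: (pattern_point c' i).
move=> c1 c2 E; apply/ffunP => i.
case c1i: (c1 i) => [b|]; first by rewrite (fixed _ _ _ _ E c1i).
by case c2i: (c2 i) => [b|] //; rewrite (fixed _ _ _ _ (esym E) c2i) in c1i.
Qed.

Lemma is_subcubeP d (C : {set cube n}) :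
  reflect (exists2 c, #|free_coords c| = d & C = subcube_of c) (is_subcube d C).
Proof.
apply: (iffP idP).
  case/existsP => F /andP [/eqP cardF /existsP [a /eqP ->]].
  exists [ffun i => if i \in F then None else Some (a i)].
    by rewrite -cardF; apply: eq_card => i; rewrite inE ffunE; case: (i \in F).
  apply/setP => x; rewrite !inE; apply/forallP/forallP => xa i.
    by rewrite ffunE; case: ifP (xa i) => iF; rewrite inE iF.
  by rewrite inE; move: (xa i); rewrite ffunE; case: (i \in F).
case=> c cardc ->; apply/existsP; exists (free_coords c); rewrite cardc eqxx /=.
apply/existsP; exists (pattern_point c); apply/eqP/setP => x; rewrite !inE.
by apply/forallP/forallP => xc i; move: (xc i); rewrite !inE ffunE; case: (c i).
Qed.

Definition hit_patterns d s (S : {set cube n}) : {set pattern n} :=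
  [set c | (#|free_coords c| == d) && (#|S :&: subcube_of c| == s)].

Lemma LamS_hit_patterns d s (S : {set cube n}) : LamS d s S = #|hit_patterns d s S|.
Proof.
rewrite /LamS -(card_imset _ subcube_of_inj); apply: eq_card => C.
rewrite !inE; apply/andP/imsetP => [[/is_subcubeP [c cardc ->] hs] | [c]].
  by exists c; rewrite // inE cardc eqxx.
rewrite inE => /andP [/eqP cardc hs] ->; split=> //.
by apply/is_subcubeP; exists c.
Qed.

Lemma LamS_le_Lam d s (S : {set cube n}) : LamS d s S <= Lam n d s.
Proof. exact: (leq_bigmax_cond (F := fun S => LamS d s S)). Qed.

Lemma Lam_attained d s : exists S : {set cube n}, Lam n d s = LamS d s S.
Proof.
have nonempty : 0 < #|{set cube n}| by apply/card_gt0P; exists set0.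
by rewrite /Lam; have [S ->] := bigop.eq_bigmax (fun S => LamS d s S) nonempty; exists S.
Qed.

Lemma card_patterns d :
  #|[set c : pattern n | #|free_coords c| == d]| = 'C(n, d) * 2 ^ (n - d).
Proof.
have card_free F : #|[set c : pattern n | free_coords c == F]| = 2 ^ (n - #|F|).
  rewrite -(@eq_card _ [set c : pattern n | [forall i,
      c i \in (if i \in F then [set None] else [set~ None])]]); last first.
    move=> c; rewrite !inE; apply/forallP/eqP => [cF | <- i].
      by apply/setP => i; rewrite inE; case: (i \in F) (cF i); rewrite !inE; case: (c i).
    by rewrite inE; case: (c i) => [b|]; rewrite !inE.
  rewrite card_split_ffun cards1 exp1n mul1n cardsC1 card_option card_bool.
  by rewrite card_setC_ord.
rewrite -sum1_card (partition_big free_coords (fun F => #|F| == d)) /=; last first.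
  by move=> c; rewrite inE.
rewrite (eq_bigr (fun=> 2 ^ (n - d))) => [|F /eqP cardF].
  rewrite -[X in 'C(X, d)]card_ord -card_draws -sum_nat_const.
  by apply: eq_bigl => F; rewrite inE.
rewrite -cardF -card_free sum1_card; apply: eq_card => c.
by rewrite unfold_in /= !inE; case: (free_coords c =P F) => [->|_]; rewrite ?eqxx ?andbF.
Qed.

Lemma card_fixed_coords c :
  #|[set p : 'I_n * bool | c p.1 == Some p.2]| = n - #|free_coords c|.
Proof.
have -> : [set p : 'I_n * bool | c p.1 == Some p.2] =
          [set (i, odflt false (c i)) | i in ~: free_coords c].
  apply/setP => [[i b]]; rewrite inE /=; apply/eqP/imsetP => [ci | [j]].
    by exists i; rewrite ?inE ci.
  by rewrite !inE => cj [-> ->]; case: (c j) cj => [a|].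
by rewrite card_imset ?card_setC_ord // => i j [].
Qed.

Lemma sum_subcube_prod (R : comNzRingType) c (g : 'I_n -> bool -> R) :
  (\sum_(x in subcube_of c) \prod_i g i (x i) = \prod_i \sum_(b | agrees (c i) b) g i b)%R.
Proof.
rewrite (bigA_distr_big_dep _ g); apply: eq_bigl => x.
by rewrite inE; apply/forallP/familyP => xc i; move: (xc i); rewrite unfold_in.
Qed.

End Patterns.

Section Restriction.
Variable n : nat.
Implicit Types (i : 'I_n.+1) (b : bool).

Definition cube_ins i b (y : cube n) : cube n.+1 :=
  [ffun j => if unlift i j is Some j' then y j' else b].
Definition pattern_del i (c : pattern n.+1) : pattern n := [ffun j => c (lift i j)].
Definition slice i b (S : {set cube n.+1}) : {set cube n} := [set y | cube_ins i b y \in S].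

Lemma cube_ins_lift i b y j : cube_ins i b y (lift i j) = y j.
Proof. by rewrite ffunE liftK. Qed.

Lemma cube_ins_pivot i b y : cube_ins i b y i = b.
Proof. by rewrite ffunE unlift_none. Qed.

Lemma cube_ins_inj i b : injective (cube_ins i b).
Proof. by move=> y1 y2 E; apply/ffunP => j; rewrite -!(cube_ins_lift i b) E. Qed.

Section FixedCoordinate.
Variables (i : 'I_n.+1) (b : bool) (c : pattern n.+1).
Hypothesis ci : c i = Some b.

Lemma subcube_of_fixed : subcube_of c = cube_ins i b @: subcube_of (pattern_del i c).
Proof.
apply/setP => x; apply/idP/imsetP => [xc | [y]].
  exists [ffun j => x (lift i j)].
    rewrite inE; apply/forallP => j; rewrite !ffunE.
    by move: xc; rewrite inE => /forallP /(_ (lift i j)).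
  apply/ffunP => j; rewrite ffunE; case: unliftP => [j'|] ->; rewrite ?ffunE //.
  exact: subcube_of_Some xc ci.
rewrite !inE => /forallP yc ->; apply/forallP => j.
case: (unliftP i j) => [j'|] ->; last by rewrite cube_ins_pivot ci /=.
by rewrite cube_ins_lift; move: (yc j'); rewrite ffunE.
Qed.

Lemma card_free_coords_del : #|free_coords (pattern_del i c)| = #|free_coords c|.
Proof.
rewrite -(card_imset _ (@lift_inj _ i)); apply: eq_card => j.
case: (unliftP i j) => [j'|] ->; first by rewrite mem_imset ?inE ?ffunE //; exact: lift_inj.
rewrite !inE ci /=; apply/imsetP => [[j' _ E]].
by move: (neq_lift i j'); rewrite -E eqxx.
Qed.

Lemma card_slice_subcube S :
  #|S :&: subcube_of c| = #|slice i b S :&: subcube_of (pattern_del i c)|.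
Proof.
rewrite -(card_imset _ (@cube_ins_inj i b)) subcube_of_fixed; apply: eq_card => x.
rewrite inE; apply/andP/imsetP => [[xS /imsetP [y yc xy]] | [y]].
  by exists y; rewrite // inE yc andbT inE -xy.
by rewrite inE => /andP [yS yc] ->; split; [rewrite inE in yS | exact: imset_f].
Qed.

End FixedCoordinate.

Lemma card_hit_patterns_fixed d s S i b :
  #|[set c in hit_patterns d s S | c i == Some b]| <= Lam n d s.
Proof.
apply: leq_trans (LamS_le_Lam d s (slice i b S)); rewrite LamS_hit_patterns.
rewrite -(card_in_imset (f := pattern_del i)) => [|c1 c2].
  apply/subset_leq_card/subsetP => c' /imsetP [c].
  rewrite !inE => /andP [/andP [dc sc] /eqP ci] ->.
  by rewrite (card_free_coords_del ci) dc -(card_slice_subcube ci).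
rewrite !inE => /andP [_ /eqP c1i] /andP [_ /eqP c2i] E.
apply/ffunP => j; case: (unliftP i j) => [j'|] ->; last by rewrite c1i c2i.
by move/ffunP: E => /(_ j'); rewrite !ffunE.
Qed.

Lemma Lam_succ_le d s : (n.+1 - d) * Lam n.+1 d s <= 2 * n.+1 * Lam n d s.
Proof.
have [S ->] := Lam_attained n.+1 d s; rewrite LamS_hit_patterns.
have fixed_pairs c : c \in hit_patterns d s S ->
    n.+1 - d = #|[set p in [set: 'I_n.+1 * bool] | c p.1 == Some p.2]|.
  by rewrite setIdE setTI inE card_fixed_coords => /andP [/eqP -> _].
rewrite mulnC -sum_nat_const (eq_bigr _ fixed_pairs) double_counting.
have -> : 2 * n.+1 = #|[set: 'I_n.+1 * bool]|.
  by rewrite cardsT card_prod card_ord card_bool mulnC.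
by rewrite -sum_nat_const; apply: leq_sum => -[i b] _; exact: card_hit_patterns_fixed.
Qed.

End Restriction.

Lemma Lam_ratio_succ_le k d s :
  Lam (k.+1 + d) d s * ('C(k + d, d) * 2 ^ k) <=
  Lam (k + d) d s * ('C(k.+1 + d, d) * 2 ^ k.+1).
Proof.
rewrite addSn expnS; set n := k + d.
have succ := Lam_succ_le n d s; rewrite (_ : n.+1 - d = k.+1) in succ; last by lia.
have bin : n.+1 * 'C(n, d) = k.+1 * 'C(n.+1, d) by rewrite mul_bin_down /n -addSn addnK.
rewrite -(leq_pmul2r (ltn0Sn k)).
have := leq_mul succ (leqnn ('C(n, d) * 2 ^ k)).
rewrite (_ : 2 * n.+1 * _ * _ = Lam n d s * (2 * 2 ^ k) * (n.+1 * 'C(n, d))); last by ring.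
by rewrite bin; lia.
Qed.

(* F_2^3, with the ring structure of [bool]: addition is componentwise xor. *)
Notation F2_3 := (bool * bool * bool)%type.

Section Characters.
Local Open Scope ring_scope.

Definition dot (l w : F2_3) : bool :=
  [&& l.1.1 & w.1.1] (+) [&& l.1.2 & w.1.2] (+) [&& l.2 & w.2].

Lemma dotDr l : {morph dot l : a b / a + b >-> a (+) b}.
Proof. by case: l => [[[] []] []] [[[] []] []] [[[] []] []]. Qed.

Lemma dot0r l : dot l 0 = false.
Proof. by case: l => [[[] []] []]. Qed.

Lemma big_F2_3 (R : nmodType) (F : F2_3 -> R) :
  \sum_l F l = \sum_(a : bool) \sum_(b : bool) \sum_(c : bool) F (a, b, c).
Proof.
rewrite (pair_bigA _ (fun a b => \sum_c F (a, b, c))).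
by rewrite (pair_bigA _ (fun p c => F (p.1, p.2, c))); apply: eq_bigr => -[[a b] c].
Qed.

Lemma card_F2_3 (P : pred F2_3) :
  #|[set w | P w]| = (\sum_(a : bool) \sum_(b : bool) \sum_(c : bool) P (a, b, c))%N.
Proof.
rewrite -sum1_card big_mkcond big_F2_3.
by do 3!(apply: eq_bigr => ? _); rewrite inE.
Qed.

Lemma sum_sign_dot (t : F2_3) : \sum_l (-1) ^+ dot l t = (8 * (t == 0%R))%N%:R :> int.
Proof. by rewrite big_F2_3 !big_bool; case: t => [[[] []] []]. Qed.

End Characters.

Definition nonzero_vectors : {set F2_3} := [set w : F2_3 | w != 0%R].

Lemma card_nonzero_vectors : #|nonzero_vectors| = 7.
Proof. by rewrite card_F2_3 !big_bool. Qed.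

Lemma card_nonzero_ker_dot l :
  l \in nonzero_vectors -> #|[set w in nonzero_vectors | ~~ dot l w]| = 3.
Proof. by rewrite card_F2_3 !big_bool !inE; case: l => [[[] []] []]. Qed.

Lemma card_nonzero_annihilating u :
  u \in nonzero_vectors -> #|[set l in nonzero_vectors | ~~ dot l u]| = 3.
Proof. by rewrite card_F2_3 !big_bool !inE; case: u => [[[] []] []]. Qed.

Section ZeroSet.
Variable n : nat.
Implicit Types (v : {ffun 'I_n -> F2_3}) (F : {set 'I_n}).
Local Open Scope ring_scope.

Definition zero_set v : {set cube n} := [set x : cube n | \sum_(i | x i) v i == 0].
Definition annihilators v F : {set F2_3} :=
  [set l in nonzero_vectors | [forall i in F, ~~ dot l (v i)]].
Definition spans v F := annihilators v F == set0.

Lemma sign_dot_sum l v (x : cube n) :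
  (-1) ^+ dot l (\sum_(i | x i) v i) =
  \prod_i (if x i then (-1) ^+ dot l (v i) else 1) :> int.
Proof.
rewrite -big_mkcond; apply: (big_morph (fun t => (-1) ^+ dot l t)) => [a b|].
  by rewrite dotDr signr_addb.
by rewrite dot0r.
Qed.

(* Expand [8 * (t == 0)] as a character sum; for [l != 0] spanning provides a free
   coordinate [i] with [dot l (v i)], whose factor [1 + (-1)] kills the product. *)
Lemma card_zero_set_subcube v (c : pattern n) : spans v (free_coords c) ->
  (8 * #|zero_set v :&: subcube_of c| = 2 ^ #|free_coords c|)%N.
Proof.
move=> /eqP span; apply/eqP; rewrite -(eqr_nat int).
have -> : #|zero_set v :&: subcube_of c| = (\sum_(x in subcube_of c) (x \in zero_set v))%N.
  by rewrite sum_indicator; apply: eq_card => x; rewrite !inE andbC.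
rewrite natrM natr_sum mulr_sumr.
under eq_bigr => x _ do rewrite -natrM inE -sum_sign_dot.
under eq_bigr => x _ do under eq_bigr => l _ do rewrite sign_dot_sum.
rewrite exchange_big /=.
under eq_bigr => l _ do
  rewrite (sum_subcube_prod c (fun i b => if b then (-1) ^+ dot l (v i) else 1)).
rewrite (bigD1 (0 : F2_3)) //= [X in _ + X]big1 ?addr0 => [|l l0].
  rewrite (eq_bigr (fun i => if i \in free_coords c then 2 else 1)) => [|i _].
    by rewrite -big_mkcond /= prodr_const natrX.
  rewrite inE; under eq_bigr do rewrite expr0 if_same.
  by case: (c i) => [[]|]; rewrite big_mkcond big_bool.
have : l \notin annihilators v (free_coords c) by rewrite span inE.
rewrite !inE l0 negb_forall => /existsP [i].
rewrite negb_imply negbK inE => /andP [/eqP ci li].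
by rewrite (bigD1 i) //= ci big_mkcond big_bool /= li expr1 addNr mul0r.
Qed.

End ZeroSet.

Section Counting.
Variable n : nat.
Implicit Types (v : {ffun 'I_n -> F2_3}) (F : {set 'I_n}).

Definition nowhere_zero : {set {ffun 'I_n -> F2_3}} :=
  [set v : {ffun 'I_n -> F2_3} | [forall i, v i \in nonzero_vectors]].
Definition constant_values v F : {set F2_3} :=
  [set u in nonzero_vectors | [forall i in F, v i == u]].

Lemma card_nowhere_zero_on F (P : pred F2_3) :
  #|[set v in nowhere_zero | [forall i in F, P (v i)]]| =
  #|[set w in nonzero_vectors | P w]| ^ #|F| * 7 ^ (n - #|F|).
Proof.
rewrite -card_setC_ord -card_nonzero_vectors -card_split_ffun.
apply: eq_card => v; rewrite !inE.
apply/andP/forallP => [[/forallP v0 /forallP vP] i | vFP].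
  case: ifP => iF; last exact: v0.
  by rewrite inE v0; move: (vP i); rewrite iF.
by split; apply/forallP => i; move: (vFP i); case: (i \in F); rewrite ?inE //= => /andP [].
Qed.

Lemma card_nowhere_zero : #|nowhere_zero| = 7 ^ n.
Proof.
have := card_nowhere_zero_on set0 xpredT; rewrite cards0 subn0 mul1n setIdE => <-.
rewrite [X in _ :&: X](_ : _ = setT) ?setIT //.
by apply/setP => v; rewrite !inE; apply/forallP => i; rewrite inE.
Qed.

(* Summed over [v], this is the union bound over the seven nonzero functionals,
   sharpened by the three of them that vanish together on a [v] constant on [F]. *)
Lemma spans_annihilators_bound v F : v \in nowhere_zero -> F != set0 ->
  1 + 2 * #|constant_values v F| <= spans v F + #|annihilators v F|.
Proof.
rewrite inE => /forallP v0 /set0Pn [i0 i0F].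
have [const | nonconst] := boolP [forall i in F, v i == v i0].
  have -> : constant_values v F = [set v i0].
    apply/setP => u; rewrite !inE; apply/andP/eqP => [[_ /forallP /(_ i0)] | ->].
      by rewrite i0F => /eqP.
    by move: (v0 i0); rewrite inE.
  rewrite cards1 -[1 + 2 * 1]/3 -(card_nonzero_annihilating (v0 i0)).
  apply: leq_trans (leq_addl _ _); apply: subset_leq_card; apply/subsetP => l.
  rewrite !inE => /andP [-> l0]; apply/forallP => i; apply/implyP => iF.
  by move/forallP/(_ i): const; rewrite iF => /eqP ->.
have -> : constant_values v F = set0.
  apply/setP => u; rewrite !inE; apply/negbTE; apply: contra nonconst.
  case/andP => _ /forallP const; apply/forallP => i; apply/implyP => iF.
  by move: (const i) (const i0); rewrite iF i0F => /eqP -> /eqP ->.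
by rewrite cards0 /spans; case: eqP => [// | /eqP]; rewrite -card_gt0.
Qed.

Lemma card_spanning F : F != set0 ->
  7 ^ n + 2 * (7 * 7 ^ (n - #|F|)) <=
  #|[set v in nowhere_zero | spans v F]| + 7 * (3 ^ #|F| * 7 ^ (n - #|F|)).
Proof.
move=> F0; have : \sum_(v in nowhere_zero) (1 + 2 * #|constant_values v F|) <=
                  \sum_(v in nowhere_zero) (spans v F + #|annihilators v F|).
  by apply: leq_sum => v vnz; exact: spans_annihilators_bound.
have const_sum : \sum_(v in nowhere_zero) #|constant_values v F| = 7 * 7 ^ (n - #|F|).
  transitivity
    (\sum_(u in nonzero_vectors) #|[set v in nowhere_zero | [forall i in F, v i == u]]|).
    exact: (double_counting _ _ (fun v u => [forall i in F, v i == u])).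
  rewrite -{1}card_nonzero_vectors -sum_nat_const; apply: eq_bigr => u u0.
  rewrite (card_nowhere_zero_on F (pred1 u)).
  suff -> : [set w in nonzero_vectors | pred1 u w] = [set u] by rewrite cards1 exp1n mul1n.
  by apply/setP => w; move: u0; rewrite !inE andbC; case: (w =P u) => // ->.
have ann_sum : \sum_(v in nowhere_zero) #|annihilators v F| =
               7 * (3 ^ #|F| * 7 ^ (n - #|F|)).
  transitivity (\sum_(l in nonzero_vectors)
                  #|[set v in nowhere_zero | [forall i in F, ~~ dot l (v i)]]|).
    exact: (double_counting _ _ (fun v l => [forall i in F, ~~ dot l (v i)])).
  rewrite -{1}card_nonzero_vectors -sum_nat_const; apply: eq_bigr => l l0.
  by rewrite (card_nowhere_zero_on F (fun w => ~~ dot l w)) card_nonzero_ker_dot.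
rewrite big_split [X in _ <= X]big_split /= sum1_card card_nowhere_zero -big_distrr /=.
by rewrite sum_indicator const_sum ann_sum.
Qed.

End Counting.

Lemma spanning_patterns_hit n d (v : {ffun 'I_n -> F2_3}) : 3 <= d ->
  #|[set c in [set c : pattern n | #|free_coords c| == d] | spans v (free_coords c)]| <=
  LamS d (2 ^ (d - 3)) (zero_set v).
Proof.
move=> d3; rewrite LamS_hit_patterns; apply/subset_leq_card/subsetP => c.
rewrite !inE => /andP [/eqP dc span]; rewrite dc eqxx /=.
have := card_zero_set_subcube span; rewrite dc -[in 2 ^ d](subnK d3) expnD mulnC.
by move/eqP; rewrite eqn_pmul2r.
Qed.

Lemma Lam_lower_bound n d : 3 <= d ->
  'C(n, d) * 2 ^ (n - d) * 7 ^ (d - 1) <=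
  Lam n d (2 ^ (d - 3)) * 7 ^ (d - 1) + 'C(n, d) * 2 ^ (n - d) * (3 ^ d - 2).
Proof.
move=> d3; have [dn | /bin_small -> //] := leqP d n.
set L := Lam n d _; set N := 'C(n, d) * 2 ^ (n - d).
set Pd := [set c : pattern n | #|free_coords c| == d].
have upper :
    \sum_(v in nowhere_zero n) #|[set c in Pd | spans v (free_coords c)]| <= 7 ^ n * L.
  rewrite -card_nowhere_zero -sum_nat_const; apply: leq_sum => v _.
  exact: leq_trans (spanning_patterns_hit v d3) (LamS_le_Lam _ _ _).
have lower : N * (7 ^ n + 2 * (7 * 7 ^ (n - d))) <=
    \sum_(v in nowhere_zero n) #|[set c in Pd | spans v (free_coords c)]| +
    N * (7 * (3 ^ d * 7 ^ (n - d))).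
  rewrite (double_counting _ _ (fun v c => spans v (free_coords c))).
  rewrite /N -card_patterns -!sum_nat_const -big_split /=; apply: leq_sum => c.
  rewrite inE => /eqP dc; rewrite -dc; apply: card_spanning.
  by rewrite -card_gt0 dc (leq_trans _ d3).
have pow7 : 7 ^ n = 7 * 7 ^ (n - d) * 7 ^ (d - 1).
  by rewrite -expnS -expnD; congr (_ ^ _); lia.
have pow3_ge2 : 2 <= 3 ^ d by rewrite (@leq_trans (3 ^ 1)) // leq_pexp2l // (leq_trans _ d3).
have pow7_gt0 : 0 < 7 * 7 ^ (n - d) by rewrite muln_gt0 expn_gt0.
by move: (leq_trans lower (leq_add upper (leqnn _))); rewrite pow7; nia.
Qed.

From mathcomp Require Import all_classical all_reals all_analysis lra.
Import numFieldNormedType.Exports.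
Local Open Scope ring_scope.

Lemma nonincreasing_limn_ge (R : realType) (u : R ^nat) (b : R) :
  nonincreasing_seq u -> (forall k, b <= u k) -> b <= limn u.
Proof.
move=> u_ni u_ge; apply: limr_ge; last exact: nearW.
by apply: nonincreasing_is_cvgn => //; exists b => _ [k _ <-].
Qed.

Section Density.
Variable R : realType.

Definition Lam_density d s (k : nat) : R :=
  (Lam (k + d) d s)%:R / ('C(k + d, d) * 2 ^ k)%:R.

Lemma Lam_density_nonincreasing d s : nonincreasing_seq (Lam_density d s).
Proof.
have pos k : (0 : R) < ('C(k + d, d) * 2 ^ k)%:R.
  by rewrite ltr0n muln_gt0 bin_gt0 leq_addl expn_gt0.
apply/nonincreasing_seqP => k; rewrite /Lam_density ler_pdivrMr // mulrAC ler_pdivlMr //.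
by rewrite -!natrM ler_nat Lam_ratio_succ_le.
Qed.

Lemma Lam_density_ge d k : (3 <= d)%N ->
  1 - (3 ^ d - 2)%:R / (7 ^ (d - 1))%:R <= Lam_density d (2 ^ (d - 3)) k.
Proof.
move=> d3; set L := Lam (k + d) d (2 ^ (d - 3)); set N := ('C(k + d, d) * 2 ^ k)%N.
set P := (7 ^ (d - 1))%N; set T := (3 ^ d - 2)%N.
have : (N * P <= L * P + N * T)%N by have := Lam_lower_bound (k + d) d3; rewrite addnK.
rewrite -(ler_nat R) natrD !(natrM _ N) (natrM _ L) => bound.
have N0 : (0 : R) < N%:R by rewrite ltr0n muln_gt0 bin_gt0 leq_addl expn_gt0.
have P0 : (0 : R) < P%:R by rewrite ltr0n expn_gt0.
rewrite /Lam_density -/L -/N ler_pdivlMr // -(ler_pM2r P0).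
by rewrite mulrBl mul1r mulrBl mulrAC divfK ?gt_eqF //; lra.
Qed.

End Density.

Theorem mainTheorem5 (R : realType) (d : nat) :
  (3 <= d)%N ->
  1 - (3 ^ d - 2)%:R / (7 ^ (d - 1))%:R <= lambda R d (2 ^ (d - 3)).
Proof.
move=> d3; apply: nonincreasing_limn_ge; first exact: Lam_density_nonincreasing.
by move=> k; exact: Lam_density_ge.
Qed.
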